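(* For every boosted instance $I=(G,t,t^* )$ and every boost action $B=(q,\tau)$ with $\tau\ge t^*_q$, $\mathrm{Win}(I,B)\ge 0$.
   Context: $G=(V,E,c)$ is an undirected graph with edge costs $c\ge0$; $\delta(S)$ denotes the edges with exactly one endpoint in $S$. Shadow moat growing on $(G,s)$, for $s:V\to\mathbb{R}_{\ge0}$: continuous process in time $\tau\ge0$ maintaining a forest (initially empty), its components, and $y_S\ge0$ (initially $0$); at time $\tau$ a component $C$ is active iff some $w\in C$ has $s_w>\tau$, and each active $C$ increases $y_C$ at rate $1$; an edge $e$ between different components with $\sum_{S:e\in\delta(S)}y_S=c_e$ is added and the components merge (ties processed by a fixed rule); stop when nothing is active. A boosted instance is $I=(G,t,t^* )$ with $t,t^*:V\to\mathbb{R}_{\ge0}$ and $t^*_v\ge t_v$ for all $v$. Run shadow moat growing on $(G,t^* )$; at each moment $\tau$, each active component $C$ contributes its growth to $y_{\mathrm{base}}$ if some $w\in C$ has $t_w>\tau$, and to $y_{\mathrm{add}}$ otherwise; so $y_{\mathrm{base}}+y_{\mathrm{add}}=\sum_S y_S$. A boost action $B=(q,\tau)$ with $\tau\ge t^*_q$ yields $\mathrm{WithBoost}(I,B)=(G,t,t^{*\prime})$ where $t^{*\prime}_q=\tau$ and $t^{*\prime}_v=t^*_v$ otherwise. If $(y_{\mathrm{base}},y_{\mathrm{add}})$ and $(y'_{\mathrm{base}},y'_{\mathrm{add}})$ are these quantities for $I$ and $\mathrm{WithBoost}(I,B)$, then $\mathrm{Win}(I,B)=y_{\mathrm{base}}-y'_{\mathrm{base}}$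 and $\mathrm{Loss}(I,B)=y'_{\mathrm{add}}-y_{\mathrm{add}}$. *)

(* Shadow moat growing as an event-driven discrete process. *)
From HB Require Import structures.
From mathcomp Require Import all_boot all_order all_algebra.
Set Implicit Arguments. Unset Strict Implicit. Unset Printing Implicit Defensive.
Import Order.TTheory GRing.Theory Num.Theory.
Local Open Scope ring_scope.

Section Moat.
Variables (R : realFieldType) (V E : finType) (ends : E -> V * V) (c : E -> R).
(* Fixed tie-breaking rule: picks one edge out of a nonempty set of tight edges. *)
Variable tie : {set E} -> E.

Record state := State {
  st_time : R;
  st_forest : {set E};
  st_y : {ffun {set V} -> R};
  st_base : R;
  st_add : R;
  st_done : bool }.

Definition crosses (e : E) (S : {set V}) : bool :=
  ((ends e).1 \in S) != ((ends e).2 \in S).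

Definition fadj (F : {set E}) : rel V :=
  fun u v => [exists e in F, (ends e == (u, v)) || (ends e == (v, u))].

Definition comp (F : {set E}) (v : V) : {set V} := [set u | connect (fadj F) v u].
Definition comps (F : {set E}) : {set {set V}} := [set comp F v | v : V].

Definition load (y : {ffun {set V} -> R}) (e : E) : R :=
  \sum_(S : {set V} | crosses e S) y S.

Definition between (F : {set E}) (e : E) : bool :=
  comp F (ends e).1 != comp F (ends e).2.

Definition active (s : V -> R) (tau : R) (C : {set V}) : bool :=
  [exists w in C, tau < s w].

Definition rate (s : V -> R) (tau : R) (F : {set E}) (e : E) : nat :=
  active s tau (comp F (ends e).1) + active s tau (comp F (ends e).2).

(* One event of shadow moat growing on (G, s), with base/add accounting
   with respect to t.  Tight edges between different components are added
   one at a time (chosen by [tie]); otherwise, if some component is active,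
   all active components grow until the next event (a threshold s_w is
   reached or an edge becomes tight); otherwise the process stops. *)
Definition step (s t : V -> R) (st : state) : state :=
  let: State tau F y yb ya d := st in
  if d then st else
  let T := [set e | between F e && (load y e == c e)] in
  if T != set0 then State tau (tie T |: F) y yb ya false else
  let A := [set C in comps F | active s tau C] in
  if A == set0 then State tau F y yb ya true else
  let thr := [seq s w - tau | w <- enum V & tau < s w] in
  let ed := [seq (c e - load y e) / (rate s tau F e)%:R
              | e <- enum E & between F e && (0 < rate s tau F e)%N] in
  let cands := thr ++ ed in
  let D := foldr Num.min (head 0 cands) cands in
  let y' := [ffun S => if S \in A then y S + D else y S] in
  (* portion of [tau, tau + D) during which some w in C has t_w > time *)
  let base C := Num.max 0 (Num.min D ((\big[Num.max/0]_(w in C) t w) - tau)) in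
  State (tau + D) F y' (yb + \sum_(C in A) base C)
        (ya + \sum_(C in A) (D - base C)) false.

Definition init_state : state := State 0 set0 [ffun => 0] 0 0 false.

(* Number of events is at most 3|V| (each tie step adds a forest edge, each
   growth step either makes an edge tight -- followed by a tie step -- or
   passes a threshold s_w); once stopped, [step] is the identity, so a
   larger fuel is harmless. *)
Definition fuel : nat := 3 * (#|V| + #|E|) + 3.

Definition final_state (s t : V -> R) : state := iter fuel (step s t) init_state.

(* For a boosted instance (G, t, tstar): run on (G, tstar), account w.r.t. t. *)
Definition y_base (t tstar : V -> R) : R := st_base (final_state tstar t).
Definition y_add (t tstar : V -> R) : R := st_add (final_state tstar t).

Definition boost (tstar : V -> R) (q : V) (tau : R) : V -> R :=
  fun v => if v == q then tau else tstar v.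

Definition Win (t tstar : V -> R) (q : V) (tau : R) : R :=
  y_base t tstar - y_base t (boost tstar q tau).
Definition Loss (t tstar : V -> R) (q : V) (tau : R) : R :=
  y_add t (boost tstar q tau) - y_add t tstar.

End Moat.

(* Raising thresholds can only decrease [y_base].  Run moat growing for
   thresholds [s <= s'] side by side: at equal times the [s']-run has a coarser
   forest, loads every edge between its components at least as much, and has
   accumulated less [y_base].  Tie steps of either run, and growth of both runs
   up to the earlier of their next events, preserve this coupling: only
   components containing some [w] with [t w > time] contribute to [y_base], these
   are active in both runs, and an [s']-component contributes at most what the
   [s]-component of its vertex of largest [t] contributes.  As the [s]-run stops
   within [fuel] steps, this bounds the final [y_base] of the [s']-run. *)

From mathcomp Require Import all_boot all_order all_algebra.
From mathcomp Require Import ring lra zify.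
Set Implicit Arguments. Unset Strict Implicit. Unset Printing Implicit Defensive.
Import Order.TTheory GRing.Theory Num.Theory.
Local Open Scope ring_scope.

Section Forests.
Variables (V E : finType) (ends : E -> V * V).
Implicit Types (F : {set E}) (e : E) (u v x : V).

Lemma fadj_sym F : symmetric (fadj ends F).
Proof.
by move=> u v; apply/existsP/existsP => -[e /andP[eF h]]; exists e; rewrite eF orbC.
Qed.

Lemma fadj_connect_sym F : connect_sym (fadj ends F).
Proof. exact/sym_connect_sym/fadj_sym. Qed.

Lemma mem_comp F u : u \in comp ends F u.
Proof. by rewrite inE connect0. Qed.

Lemma eq_comp F u v : (comp ends F u == comp ends F v) = connect (fadj ends F) u v.
Proof.
apply/eqP/idP => [eq_uv | uv]; first by have := mem_comp F v; rewrite -eq_uv inE.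
by apply/setP => x; rewrite !inE (same_connect (fadj_connect_sym F) uv).
Qed.

Lemma comp_of_mem F u x : x \in comp ends F u -> comp ends F x = comp ends F u.
Proof. by rewrite inE => ux; apply/esym/eqP; rewrite eq_comp. Qed.

Lemma comp_in_comps F v : comp ends F v \in comps ends F.
Proof. exact: imset_f. Qed.

Lemma compsP F C : reflect (exists v, C = comp ends F v) (C \in comps ends F).
Proof.
apply: (iffP idP) => [/imsetP[v _ ->] | [v ->]]; [by exists v | exact: comp_in_comps].
Qed.

Lemma betweenE F e : between ends F e = ~~ connect (fadj ends F) (ends e).1 (ends e).2.
Proof. by rewrite /between eq_comp. Qed.

Lemma between_notin F e : between ends F e -> e \notin F.
Proof.
rewrite betweenE; apply: contra => eF; apply: connect1; apply/existsP; exists e.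
by rewrite eF -surjective_pairing eqxx.
Qed.

Definition coarser F F' := subrel (connect (fadj ends F)) (connect (fadj ends F')).

Lemma subset_coarser F F' : F \subset F' -> coarser F F'.
Proof.
move=> sFF'; apply: connect_sub => u v /existsP[e /andP[eF uv]].
by apply: connect1; apply/existsP; exists e; rewrite (subsetP sFF' e eF).
Qed.

Lemma coarser_setU1 F F' e : coarser F F' ->
  connect (fadj ends F') (ends e).1 (ends e).2 -> coarser (e |: F) F'.
Proof.
move=> cFF' conn_e; apply: connect_sub => u v /existsP[e' /andP[]].
rewrite !inE => /orP[/eqP -> | e'F].
  by case/orP=> /eqP ends_e; rewrite ends_e /= in conn_e; rewrite // fadj_connect_sym.
by move=> uv; apply: cFF'; apply: connect1; apply/existsP; exists e'; rewrite e'F.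
Qed.

Lemma coarser_between F F' e : coarser F F' -> between ends F' e -> between ends F e.
Proof. by move=> cFF'; rewrite !betweenE; apply/contra/cFF'. Qed.

Lemma coarser_comp F F' u : coarser F F' -> comp ends F u \subset comp ends F' u.
Proof. by move=> cFF'; apply/subsetP => x; rewrite !inE; apply: cFF'. Qed.

End Forests.

Section SeqMin.
Variable R : realDomainType.
Implicit Types (l : seq R) (x d : R).

(* The seed [head 0 l] only matters when [l] is empty. *)
Definition seqmin l := foldr Num.min (head 0 l) l.

Lemma foldr_min_le a l x : x \in a :: l -> foldr Num.min a l <= x.
Proof.
elim: l x => [|b l IH] x /=; first by rewrite inE => /eqP ->.
rewrite !inE ge_min => /or3P[/eqP-> | /eqP-> | xl]; first by rewrite IH ?orbT ?mem_head.
  by rewrite lexx.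
by rewrite IH ?orbT // inE xl orbT.
Qed.

Lemma foldr_min_mem a l : foldr Num.min a l \in a :: l.
Proof.
elim: l => [|b l IH] /=; first by rewrite mem_head.
rewrite /Num.min; case: ifP => _; rewrite !inE ?eqxx ?orbT //.
by move: IH; rewrite inE => /orP[] ->; rewrite ?orbT.
Qed.

Lemma seqmin_le l x : x \in l -> seqmin l <= x.
Proof. by case: l => // a l xl; apply: foldr_min_le; rewrite inE xl orbT. Qed.

Lemma seqmin_mem l : l != [::] -> seqmin l \in l.
Proof.
case: l => // a l _; have := foldr_min_mem a (a :: l).
by rewrite /seqmin /= inE => /orP[/eqP-> |]; rewrite ?mem_head.
Qed.

Lemma seqmin_ge0 l : {in l, forall x, 0 <= x} -> 0 <= seqmin l.
Proof. by case: l => [|a l] l_ge0 //; apply/l_ge0/seqmin_mem. Qed.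

Lemma seqmin_subr l d : l != [::] -> seqmin [seq x - d | x <- l] = seqmin l - d.
Proof.
have shift a l' : foldr Num.min (a - d) [seq x - d | x <- l'] = foldr Num.min a l' - d.
  by elim: l' => //= b l' ->; rewrite /Num.min ltrD2r; case: ifP.
by case: l => // a l _; rewrite /seqmin -shift.
Qed.

End SeqMin.

Ltac case_minmax := repeat match goal with
  | |- context [Num.min ?a ?b] => case: (leP a b) => ?
  | |- context [Num.max ?a ?b] => case: (leP a b) => ? end.

Section ShadowMoat.
Variables (R : realFieldType) (V E : finType) (ends : E -> V * V) (c : E -> R).
Variables (tie : {set E} -> E) (t : V -> R).
Implicit Types (s : V -> R) (tau d : R) (F : {set E}) (e : E) (C : {set V}).
Implicit Types (y : {ffun {set V} -> R}) (st : state R V E).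

Local Notation moat_step s := (step ends c tie s t).

Definition tight_edges F y := [set e | between ends F e && (load ends y e == c e)].

Definition active_comps s tau F := [set C in comps ends F | active s tau C].

Definition delays s tau F y :=
  [seq s w - tau | w <- enum V & tau < s w] ++
  [seq (c e - load ends y e) / (rate ends s tau F e)%:R
     | e <- enum E & between ends F e && (0 < rate ends s tau F e)%N].

Definition next_delay s st := seqmin (delays s (st_time st) (st_forest st) (st_y st)).

Definition tmax C := \big[Num.max/0]_(w in C) t w.

(* Length of the part of [[tau, tau + d)] during which [C] grows [y_base]. *)
Definition base_share tau C d := Num.max 0 (Num.min d (tmax C - tau)).

(* The growth branch of [step], for an arbitrary duration [d]. *)
Definition grow s st d :=
  let: State tau F y yb ya _ := st in
  let A := active_comps s tau F in
  State (tau + d) F [ffun S => if S \in A then y S + d else y S]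
    (yb + \sum_(C in A) base_share tau C d) (ya + \sum_(C in A) (d - base_share tau C d))
    false.

Lemma grow_time s st d : st_time (grow s st d) = st_time st + d.
Proof. by case: st. Qed.

Lemma grow_forest s st d : st_forest (grow s st d) = st_forest st.
Proof. by case: st. Qed.

Lemma grow_done s st d : st_done (grow s st d) = false.
Proof. by case: st. Qed.

Lemma grow_base s st d : st_base (grow s st d) =
  st_base st + \sum_(C in active_comps s (st_time st) (st_forest st)) base_share (st_time st) C d.
Proof. by case: st. Qed.

Lemma stepE s st : moat_step s st =
  if st_done st then st else
  if tight_edges (st_forest st) (st_y st) != set0 then
    State (st_time st) (tie (tight_edges (st_forest st) (st_y st)) |: st_forest st)
      (st_y st) (st_base st) (st_add st) false
  else if active_comps s (st_time st) (st_forest st) == set0 then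
    State (st_time st) (st_forest st) (st_y st) (st_base st) (st_add st) true
  else grow s st (next_delay s st).
Proof. by case: st => tau F y yb ya []. Qed.

Lemma step_grow s st : ~~ st_done st ->
  tight_edges (st_forest st) (st_y st) = set0 ->
  active_comps s (st_time st) (st_forest st) != set0 ->
  moat_step s st = grow s st (next_delay s st).
Proof.
by move=> not_done no_tight act; rewrite stepE (negbTE not_done) no_tight eqxx (negbTE act).
Qed.

Lemma active_compsP s tau F :
  reflect (exists w, tau < s w) (active_comps s tau F != set0).
Proof.
apply: (iffP (set0Pn _)) => [[C] | [w lt_w]].
  by rewrite inE => /andP[_ /existsP[w /andP[_ lt_w]]]; exists w.
exists (comp ends F w); rewrite inE comp_in_comps /=.
by apply/existsP; exists w; rewrite mem_comp.
Qed.

Lemma comp_crosses F e C : C \in comps ends F -> crosses ends e C ->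
  C = comp ends F (ends e).1 \/ C = comp ends F (ends e).2.
Proof.
case/compsP => x ->; rewrite /crosses.
case: (boolP (_ \in _)) => [u_in _ | _ /negPn v_in]; first by left; rewrite (comp_of_mem u_in).
by right; rewrite (comp_of_mem v_in).
Qed.

Lemma load_grow s st d e : between ends (st_forest st) e ->
  load ends (st_y (grow s st d)) e =
  load ends (st_y st) e + d * (rate ends s (st_time st) (st_forest st) e)%:R.
Proof.
case: st => tau F y yb ya dn /= be; rewrite /load.
set A := active_comps s tau F.
rewrite (eq_bigr (fun S => y S + (if S \in A then d else 0))); last first.
  by move=> S _; rewrite ffunE; case: ifP; rewrite ?addr0.
rewrite big_split /=; congr (_ + _).
set u := (ends e).1; set v := (ends e).2.
have neq_uv : comp ends F u != comp ends F v by [].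
have u_notin_v : u \notin comp ends F v by apply: contra neq_uv => /comp_of_mem ->.
have v_notin_u : v \notin comp ends F u by apply: contra neq_uv => /comp_of_mem <-.
have cross_u : crosses ends e (comp ends F u) by rewrite /crosses mem_comp (negbTE v_notin_u).
have cross_v : crosses ends e (comp ends F v) by rewrite /crosses mem_comp (negbTE u_notin_v).
rewrite (bigD1 (comp ends F u)) //= (bigD1 (comp ends F v)) /=; last by rewrite cross_v eq_sym.
rewrite big1 ?addr0 => [|S /andP[/andP[cross_S neq_u] neq_v]]; last first.
  rewrite inE; case: (boolP (S \in comps ends F)) => //= S_comp.
  by case: (comp_crosses S_comp cross_S) => S_eq; rewrite S_eq eqxx in neq_u neq_v.
rewrite !inE !comp_in_comps /= /rate natrD mulrDr.
by case: (active s tau (comp ends F u)); case: (active s tau (comp ends F v));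
  rewrite /= ?mulr1 ?mulr0.
Qed.

Lemma base_share_ge0 tau C d : 0 <= base_share tau C d.
Proof. by rewrite /base_share le_max lexx. Qed.

Lemma le_base_share tau C : {homo base_share tau C : d d' / d <= d'}.
Proof. by rewrite /base_share => d d' ?; case_minmax; lra. Qed.

Lemma base_shareD tau C d D : 0 <= d -> d <= D ->
  base_share tau C d + base_share (tau + d) C (D - d) = base_share tau C D.
Proof. by rewrite /base_share opprD addrA => ? ?; case_minmax; lra. Qed.

Lemma tmax_ge C w : w \in C -> t w <= tmax C.
Proof. exact: le_bigmax_cond. Qed.

Lemma tmax_attained (t_ge0 : forall w, 0 <= t w) C w0 : w0 \in C ->
  exists2 w, w \in C & tmax C = t w.
Proof.
move=> w0C; have [w wC t_max] := arg_maxP t w0C.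
by exists w => //; apply/le_anti; rewrite tmax_ge // andbT; apply: bigmax_le.
Qed.

Lemma le_base_share_tmax tau d C C' : tmax C <= tmax C' ->
  base_share tau C d <= base_share tau C' d.
Proof. by rewrite /base_share => ?; case_minmax; lra. Qed.

Lemma base_share_expired tau C d : 0 <= tau -> {in C, forall w, t w <= tau} ->
  base_share tau C d = 0.
Proof.
move=> tau_ge0 t_le; have : tmax C <= tau by apply: bigmax_le.
by rewrite /base_share => ?; case_minmax; lra.
Qed.

(* Only components containing some [w] with [t w > tau] have positive share, and
   these are active as soon as [t <= s]. *)
Lemma sum_active_base_share s tau F d : 0 <= tau -> (forall w, t w <= s w) ->
  \sum_(C in active_comps s tau F) base_share tau C d =
  \sum_(C in comps ends F) base_share tau C d.
Proof.
move=> tau_ge0 t_le_s; rewrite [RHS](bigID (active s tau)) /= [X in _ + X]big1 ?addr0.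
  by apply: eq_bigl => C; rewrite inE.
move=> C /andP[_ inactive]; apply: base_share_expired => // w wC.
apply: le_trans (t_le_s w) _; rewrite leNgt; apply: contra inactive => lt_w.
by apply/existsP; exists w; rewrite wC.
Qed.

Section Coarsening.
Hypothesis t_ge0 : forall w, 0 <= t w.
Variables (F F' : {set E}).
Hypothesis coarser_FF' : coarser ends F F'.

(* Each component of [F'] is dominated by the component of [F] that contains
   its vertex of largest [t]. *)
Lemma base_share_le_subcomps tau d C' : C' \in comps ends F' ->
  base_share tau C' d <= \sum_(C in comps ends F | C \subset C') base_share tau C d.
Proof.
case/compsP => v ->; have [w wC' tmax_w] := tmax_attained t_ge0 (mem_comp ends F' v).
rewrite (bigD1 (comp ends F w)) /=; last first.
  by rewrite comp_in_comps -(comp_of_mem wC') coarser_comp.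
apply: ler_wpDr; first by apply: sumr_ge0 => C _; apply: base_share_ge0.
by apply: le_base_share_tmax; rewrite tmax_w tmax_ge ?mem_comp.
Qed.

Lemma sum_base_share_coarser tau d :
  \sum_(C in comps ends F') base_share tau C d <= \sum_(C in comps ends F) base_share tau C d.
Proof.
apply: le_trans (ler_sum _ (fun C' => @base_share_le_subcomps tau d C')) _.
rewrite (exchange_big_dep (mem (comps ends F))) /=; last by move=> ? ? _ /andP[].
apply: ler_sum => _ /compsP[v ->].
rewrite (big_pred1 (comp ends F' v)) // => C' /=; apply/idP/idP.
  by case/andP => /compsP[x ->] /andP[_ /subsetP/(_ v (mem_comp _ _ _))/comp_of_mem->].
by move/eqP ->; rewrite !comp_in_comps coarser_comp.
Qed.

End Coarsening.

Record feasible st : Prop := Feasible {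
  feasible_time : 0 <= st_time st;
  feasible_load : forall e, between ends (st_forest st) e -> load ends (st_y st) e <= c e }.

Lemma feasible_init : (forall e, 0 <= c e) -> feasible (init_state R V E).
Proof. by move=> c_ge0; split=> //= e _; rewrite /load big1 // => S _; rewrite ffunE. Qed.

Lemma mem_delays_threshold s tau F y w : tau < s w -> s w - tau \in delays s tau F y.
Proof.
by move=> lt_w; rewrite mem_cat; apply/orP; left; apply: map_f; rewrite mem_filter lt_w mem_enum.
Qed.

Lemma mem_delays_edge s tau F y e : between ends F e -> (0 < rate ends s tau F e)%N ->
  (c e - load ends y e) / (rate ends s tau F e)%:R \in delays s tau F y.
Proof.
move=> be rate_gt0; rewrite mem_cat; apply/orP; right.
by apply: (map_f (fun e => (c e - load ends y e) / _)); rewrite mem_filter be rate_gt0 mem_enum.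
Qed.

Lemma delaysP s tau F y x : x \in delays s tau F y ->
  (exists2 w, tau < s w & x = s w - tau) \/
  (exists e, [/\ between ends F e, (0 < rate ends s tau F e)%N &
                 x = (c e - load ends y e) / (rate ends s tau F e)%:R]).
Proof.
rewrite mem_cat => /orP[/mapP[w] | /mapP[e]]; rewrite mem_filter.
  by case/andP => lt_w _ ->; left; exists w.
by case/andP => /andP[be rate_gt0] _ ->; right; exists e.
Qed.

Lemma delays_nil s tau F y w : tau < s w -> delays s tau F y != [::].
Proof. by move=> /(mem_delays_threshold F y); apply: contraTneq => ->. Qed.

Lemma next_delay_ge0 s st : feasible st -> 0 <= next_delay s st.
Proof.
case=> _ load_le; apply: seqmin_ge0 => x /delaysP[[w lt_w ->] | [e [be _ ->]]].
  by rewrite subr_ge0 ltW.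
by rewrite divr_ge0 ?ler0n // subr_ge0 load_le.
Qed.

Lemma feasible_grow s st d : feasible st -> 0 <= d -> d <= next_delay s st ->
  feasible (grow s st d).
Proof.
case=> time_ge0 load_le d_ge0 d_le; split; first by rewrite grow_time addr_ge0.
move=> e; rewrite grow_forest => be; rewrite load_grow //.
case: (posnP (rate ends s (st_time st) (st_forest st) e)) => [-> | rate_gt0].
  by rewrite mulr0 addr0 load_le.
have := seqmin_le (mem_delays_edge (st_y st) be rate_gt0); move/(le_trans d_le).
rewrite ler_pdivlMr ?ltr0n // => ?; lra.
Qed.

Lemma feasible_step s st : feasible st -> feasible (moat_step s st).
Proof.
move=> feas_st; rewrite stepE; case: ifP => // _; case: ifP => [_ | _].
  case: feas_st => time_ge0 load_le; split=> // e be; apply/load_le/(coarser_between _ be).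
  exact/subset_coarser/subsetUr.
case: ifP => _; first by case: feas_st.
exact: feasible_grow (next_delay_ge0 s feas_st) _.
Qed.

Lemma grow_base_ge s st d : st_base st <= st_base (grow s st d).
Proof. by rewrite grow_base lerDl sumr_ge0 // => C _; apply: base_share_ge0. Qed.

Lemma le_grow_base s st : {homo (fun d => st_base (grow s st d)) : d d' / d <= d'}.
Proof.
by move=> d d' le_dd'; rewrite !grow_base lerD2l ler_sum // => C _; apply: le_base_share.
Qed.

Section PartialGrowth.
Variables (s : V -> R) (st : state R V E) (d : R).
Hypotheses (d_ge0 : 0 <= d) (d_lt : d < next_delay s st).

Lemma lt_threshold_grow w : (st_time st + d < s w) = (st_time st < s w).
Proof.
apply/idP/idP => lt_w; first by apply: le_lt_trans lt_w; rewrite lerDl.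
have := lt_le_trans d_lt (seqmin_le (mem_delays_threshold (st_forest st) (st_y st) lt_w)).
lra.
Qed.

Lemma active_grow C : active s (st_time st + d) C = active s (st_time st) C.
Proof. by apply: eq_existsb => w; rewrite lt_threshold_grow. Qed.

Lemma active_comps_grow F :
  active_comps s (st_time st + d) F = active_comps s (st_time st) F.
Proof. by apply/setP => C; rewrite !inE active_grow. Qed.

Lemma rate_grow F e : rate ends s (st_time st + d) F e = rate ends s (st_time st) F e.
Proof. by rewrite /rate !active_grow. Qed.

Lemma tight_edges_grow : tight_edges (st_forest st) (st_y st) = set0 ->
  tight_edges (st_forest (grow s st d)) (st_y (grow s st d)) = set0.
Proof.
move=> no_tight; apply/setP => e; rewrite !inE grow_forest.
case: (boolP (between _ _ e)) => //= be; rewrite load_grow //; apply/negbTE.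
have load_neq : load ends (st_y st) e != c e.
  by apply: contraT => /negPn tight; rewrite -(in_set0 e) -no_tight inE be tight.
case: (posnP (rate ends s (st_time st) (st_forest st) e)) => [-> | rate_gt0].
  by rewrite mulr0 addr0.
have := lt_le_trans d_lt (seqmin_le (mem_delays_edge (st_y st) be rate_gt0)).
by rewrite ltr_pdivlMr ?ltr0n // ltrBrDl => /lt_eqF ->.
Qed.

Lemma delays_grow :
  delays s (st_time (grow s st d)) (st_forest (grow s st d)) (st_y (grow s st d)) =
  [seq x - d | x <- delays s (st_time st) (st_forest st) (st_y st)].
Proof.
rewrite grow_time grow_forest /delays map_cat; congr (_ ++ _).
  by rewrite (eq_filter lt_threshold_grow) -map_comp; apply: eq_map => w /=; ring.
set rate0 := rate ends s (st_time st) (st_forest st).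
rewrite (@eq_filter _ _ (fun e => between ends (st_forest st) e && (0 < rate0 e)%N)); last first.
  by move=> e /=; rewrite rate_grow.
rewrite -map_comp; apply/eq_in_map => e; rewrite mem_filter => /andP[/andP[be rate_gt0] _] /=.
rewrite rate_grow load_grow //; field.
by rewrite pnatr_eq0 -lt0n.
Qed.

Lemma grow_grow D : d <= D -> grow s (grow s st d) (D - d) = grow s st D.
Proof.
move=> le_dD; case: st lt_threshold_grow active_comps_grow => tau F y yb ya dn _ act_grow /=.
rewrite act_grow; congr State.
- ring.
- by apply/ffunP => S; rewrite !ffunE; case: (S \in _) => //; ring.
- rewrite -addrA -big_split; congr (_ + _); apply: eq_bigr => C _.
  exact: base_shareD.
- rewrite -addrA -big_split /=; congr (_ + _); apply: eq_bigr => C _.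
  have := base_shareD tau C d_ge0 le_dD; lra.
Qed.

Lemma step_grow_partial : ~~ st_done st ->
  tight_edges (st_forest st) (st_y st) = set0 ->
  active_comps s (st_time st) (st_forest st) != set0 ->
  moat_step s (grow s st d) = moat_step s st.
Proof.
move=> not_done no_tight act; rewrite [RHS]step_grow // step_grow ?grow_done ?tight_edges_grow //;
  last by rewrite grow_time grow_forest active_comps_grow.
have [w lt_w] := active_compsP _ _ _ act.
rewrite /next_delay delays_grow seqmin_subr; last exact: delays_nil lt_w.
by apply: grow_grow; apply: ltW.
Qed.

End PartialGrowth.

Section Termination.
Hypothesis tie_in : forall A : {set E}, A != set0 -> tie A \in A.
Variable s : V -> R.

(* A tie step adds a forest edge; a growth step either passes a threshold
   [s w] or makes an edge tight. *)
Definition potential st : nat :=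
  2 * (#|E| - #|st_forest st|) + #|[set w | st_time st < s w]| +
  (tight_edges (st_forest st) (st_y st) == set0).

Lemma done_iter st n : st_done st -> iter n (moat_step s) st = st.
Proof. by move=> done_st; elim: n => //= n ->; rewrite stepE done_st. Qed.

Lemma potential_tie st : ~~ st_done st ->
  tight_edges (st_forest st) (st_y st) != set0 -> (potential (moat_step s st) < potential st)%N.
Proof.
move=> not_done tight; rewrite stepE (negbTE not_done) tight /potential /=.
move: (tie_in tight); rewrite inE => /andP[/between_notin e_notin _].
have := max_card (tie (tight_edges (st_forest st) (st_y st)) |: st_forest st).
rewrite cardsU1 e_notin (negbTE tight) /=.
by case: (_ == set0) => /=; lia.
Qed.

Lemma potential_grow st : feasible st -> ~~ st_done st ->
  tight_edges (st_forest st) (st_y st) = set0 ->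
  active_comps s (st_time st) (st_forest st) != set0 ->
  (potential (moat_step s st) < potential st)%N.
Proof.
move=> feas not_done no_tight act.
rewrite step_grow // /potential grow_forest grow_time no_tight eqxx.
set D := next_delay s st; have [w0 lt_w0] := active_compsP _ _ _ act.
have sub_thr : [set w | st_time st + D < s w] \subset [set w | st_time st < s w].
  by apply/subsetP => w; rewrite !inE; apply: le_lt_trans; rewrite lerDl next_delay_ge0.
have progress : [set w | st_time st + D < s w] \proper [set w | st_time st < s w] \/
                tight_edges (st_forest st) (st_y (grow s st D)) != set0.
  case/delaysP: (seqmin_mem (delays_nil (st_forest st) (st_y st) lt_w0)).
    move=> [w lt_w eq_D]; left; apply/properP; split=> //; exists w; rewrite !inE ?lt_w //.
    by rewrite /D /next_delay eq_D addrC subrK ltxx.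
  move=> [e [be rate_gt0 eq_D]]; right; apply/set0Pn; exists e.
  rewrite inE be load_grow //= /D /next_delay eq_D.
  by rewrite mulrC mulrCA divff ?mulr1 ?pnatr_eq0 -?lt0n // subrKC.
move: (subset_leq_card sub_thr) progress => le_thr [/proper_card | /negbTE ->] /=;
  move: le_thr; move: #|[set w | _ + D < s w]| #|[set w | _ < s w]| => a b; last lia.
by case: (_ == set0) => /=; lia.
Qed.

Lemma iter_step_done k st : feasible st -> (potential st < k)%N ->
  st_done (iter k (moat_step s) st).
Proof.
elim: k st => // k IH st feas lt_k; rewrite iterSr.
case: (boolP (st_done st)) => [done_st | not_done].
  by rewrite [moat_step s st]stepE done_st done_iter.
have [done_step | lt_pot] :
    st_done (moat_step s st) \/ (potential (moat_step s st) < potential st)%N.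
  have [no_tight | tight] := eqVneq (tight_edges (st_forest st) (st_y st)) set0; last first.
    by right; apply: potential_tie.
  have [no_act | act] := eqVneq (active_comps s (st_time st) (st_forest st)) set0; last first.
    by right; apply: potential_grow.
  by left; rewrite stepE (negbTE not_done) no_tight no_act !eqxx.
- by rewrite done_iter.
- by apply: IH; [apply: feasible_step | lia].
Qed.

Lemma final_state_done : (forall e, 0 <= c e) -> st_done (final_state ends c tie s t).
Proof.
move=> c_ge0; apply: iter_step_done (feasible_init c_ge0) _.
have : (#|[set w | (0 < s w)%R]| <= #|V|)%N := max_card _.
rewrite /potential /fuel cards0 subn0 /=; move: #|[set w | (0 < s w)%R]| => n_pos.
by case: (_ == set0) => /=; lia.
Qed.

End Termination.

Lemma base_step_ge s st : st_base st <= st_base (moat_step s st).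
Proof. by rewrite stepE; do 3 case: ifP => // _; apply: grow_base_ge. Qed.

Lemma base_iter_homo s st :
  {homo (fun n => st_base (iter n (moat_step s) st)) : m n / (m <= n)%N >-> m <= n}.
Proof.
move=> m n /subnK <-; elim: (n - m)%N => //= k IH.
exact: le_trans IH (base_step_ge _ _).
Qed.

Lemma base_iter_le_done s st k m : st_done (iter k (moat_step s) st) ->
  st_base (iter m (moat_step s) st) <= st_base (iter k (moat_step s) st).
Proof.
move=> done_k; have [/base_iter_homo // | /ltnW le_km] := leqP m k.
by rewrite -(subnK le_km) iterD done_iter.
Qed.

Lemma base_iter_expired s st n : feasible st -> (forall w, t w <= st_time st) ->
  st_base (iter n (moat_step s) st) = st_base st.
Proof.
elim: n st => // n IH st feas expired; rewrite iterSr IH; last 2 first.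
- exact: feasible_step.
- move=> w; apply: le_trans (expired w) _.
  by rewrite stepE; do 3 case: ifP => // _; rewrite grow_time lerDl next_delay_ge0.
rewrite stepE; do 3 case: ifP => // _.
rewrite grow_base big1 ?addr0 // => C _.
by apply: base_share_expired => [|w _]; [case: feas | apply: expired].
Qed.

Lemma active_homo s s' tau C C' : C \subset C' -> (forall w, s w <= s' w) ->
  active s tau C -> active s' tau C'.
Proof.
move=> sub_CC' le_ss' /existsP[w /andP[wC lt_w]]; apply/existsP; exists w.
by rewrite (subsetP sub_CC' w wC) (lt_le_trans lt_w (le_ss' w)).
Qed.

Lemma rate_homo s s' tau F F' e : coarser ends F F' -> (forall w, s w <= s' w) ->
  (rate ends s tau F e <= rate ends s' tau F' e)%N.
Proof.
move=> cFF' le_ss'; have act_homo u := active_homo (tau := tau) (coarser_comp u cFF') le_ss'.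
rewrite /rate leq_add //.
  by case: (active s tau _) (act_homo (ends e).1) => // ->.
by case: (active s tau _) (act_homo (ends e).2) => // ->.
Qed.

Lemma iter_step_grow_partial s st d n : 0 <= d -> d < next_delay s st -> ~~ st_done st ->
  tight_edges (st_forest st) (st_y st) = set0 ->
  active_comps s (st_time st) (st_forest st) != set0 ->
  iter n.+1 (moat_step s) (grow s st d) = iter n.+1 (moat_step s) st.
Proof. by move=> *; rewrite !iterSr step_grow_partial. Qed.

Lemma base_iter_grow_partial s st d n : 0 <= d -> d < next_delay s st -> ~~ st_done st ->
  tight_edges (st_forest st) (st_y st) = set0 ->
  active_comps s (st_time st) (st_forest st) != set0 ->
  exists m, st_base (iter n (moat_step s) (grow s st d)) <= st_base (iter m (moat_step s) st).
Proof.
move=> d_ge0 d_lt not_done no_tight act; case: n => [|n].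
  by exists 1%N; rewrite /= step_grow //; apply/le_grow_base/ltW.
by exists n.+1; rewrite iter_step_grow_partial.
Qed.

Section Coupling.
Hypothesis tie_in : forall A : {set E}, A != set0 -> tie A \in A.
Hypothesis t_ge0 : forall w, 0 <= t w.
Variables (s s' : V -> R).
Hypotheses (t_le_s : forall w, t w <= s w) (s_le_s' : forall w, s w <= s' w).

Let t_le_s' w : t w <= s' w := le_trans (t_le_s w) (s_le_s' w).

(* [st'] is a state of the run with the larger thresholds [s'] that is behind
   [st] in [y_base] but ahead of it in the growth of every cut of its forest. *)
Record coupled st st' : Prop := Coupled {
  coupled_running : ~~ st_done st;
  coupled_running' : ~~ st_done st';
  coupled_time : st_time st = st_time st';
  coupled_feasible : feasible st;
  coupled_feasible' : feasible st';
  coupled_coarser : coarser ends (st_forest st) (st_forest st');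
  coupled_load : forall e, between ends (st_forest st') e ->
    load ends (st_y st) e <= load ends (st_y st') e;
  coupled_base : st_base st' <= st_base st }.

Lemma coupled_init : (forall e, 0 <= c e) -> coupled (init_state R V E) (init_state R V E).
Proof. by move=> c_ge0; split=> //; apply: feasible_init. Qed.

Lemma coupled_tie' st st' : coupled st st' ->
  tight_edges (st_forest st') (st_y st') != set0 -> coupled st (moat_step s' st').
Proof.
case=> running running' eq_time feas feas' cF load_le base_le tight.
have feas_step := feasible_step s' feas'; rewrite stepE (negbTE running') tight in feas_step *.
have cF' : coarser ends (st_forest st')
    (tie (tight_edges (st_forest st') (st_y st')) |: st_forest st').
  exact/subset_coarser/subsetUr.
split=> //= [u v /cF /cF' // | e be]; exact/load_le/(coarser_between cF' be).
Qed.

Lemma coupled_tie st st' : coupled st st' ->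
  tight_edges (st_forest st') (st_y st') = set0 ->
  tight_edges (st_forest st) (st_y st) != set0 -> coupled (moat_step s st) st'.
Proof.
case=> running running' eq_time feas feas' cF load_le base_le no_tight' tight.
have feas_step := feasible_step s feas; rewrite stepE (negbTE running) tight in feas_step *.
split=> //=; apply: coarser_setU1 => //.
move: (tie_in tight); set e := tie _; rewrite inE => /andP[_ /eqP tight_e].
apply: contraT => not_conn; have be' : between ends (st_forest st') e by rewrite betweenE.
suff : e \in tight_edges (st_forest st') (st_y st') by rewrite no_tight' inE.
rewrite inE be' eq_le feasible_load //= -tight_e; exact: load_le.
Qed.

Lemma coupled_grow st st' d : coupled st st' ->
  tight_edges (st_forest st) (st_y st) = set0 ->
  tight_edges (st_forest st') (st_y st') = set0 ->
  0 <= d -> d <= next_delay s st -> d <= next_delay s' st' ->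
  coupled (grow s st d) (grow s' st' d).
Proof.
case=> running running' eq_time feas feas' cF load_le base_le no_tight no_tight' d_ge0 d_le d_le'.
have tau_ge0 := feasible_time feas.
split; rewrite ?grow_done ?grow_time ?grow_forest ?eq_time //; try exact: feasible_grow.
- move=> e be; have be0 := coarser_between cF be.
  rewrite !load_grow // -eq_time; apply: lerD; first exact: load_le.
  by rewrite ler_wpM2l // ler_nat rate_homo.
- rewrite !grow_base -eq_time; apply: lerD => //.
  by rewrite !sum_active_base_share // sum_base_share_coarser.
Qed.

(* Induction on the total number of steps still to be simulated; a partial
   growth of one run, up to the next event of the other, does not count as a step. *)
Lemma coupled_base_bound N n k st st' : (n + k <= N)%N -> coupled st st' ->
  st_done (iter k (moat_step s) st) ->
  exists m, st_base (iter n (moat_step s') st') <= st_base (iter m (moat_step s) st).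
Proof.
elim: N n k st st' => [|N IH] [|n] k st st' le_N cpl done_k;
  try by [lia | exists 0%N; apply: coupled_base cpl].
case: k le_N done_k => [|k] le_N done_k.
  by rewrite /= (negbTE (coupled_running cpl)) in done_k.
have [running running' eq_time feas feas' _ _ _] := cpl.
case: (boolP [exists w, st_time st < s w]) => [/existsP[w0 lt_w0] | expired]; last first.
  exists 0%N; rewrite base_iter_expired // ?(coupled_base cpl) // => w.
  rewrite -eq_time (le_trans (t_le_s w)) // leNgt; apply: contra expired => lt_w.
  by apply/existsP; exists w.
have [no_tight' | tight'] := eqVneq (tight_edges (st_forest st') (st_y st')) set0; last first.
  have [m le_m] := IH n k.+1 st _ ltac:(lia) (coupled_tie' cpl tight') done_k.
  by exists m; rewrite iterSr.
have [no_tight | tight] := eqVneq (tight_edges (st_forest st) (st_y st)) set0; last first.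
  have [m le_m] := IH n.+1 k _ st' ltac:(lia) (coupled_tie cpl no_tight' tight)
    ltac:(by rewrite -iterSr).
  by exists m.+1; rewrite [iter m.+1 _ _]iterSr.
have act : active_comps s (st_time st) (st_forest st) != set0 by apply/active_compsP; exists w0.
have act' : active_comps s' (st_time st') (st_forest st') != set0.
  by apply/active_compsP; exists w0; rewrite -eq_time (lt_le_trans lt_w0).
have D_ge0 := next_delay_ge0 s feas; have D'_ge0 := next_delay_ge0 s' feas'.
have [lt_DD' | lt_D'D | eq_DD'] := ltgtP (next_delay s st) (next_delay s' st').
- have := coupled_grow cpl no_tight no_tight' D_ge0 (lexx _) (ltW lt_DD').
  rewrite -step_grow // => cpl1.
  have [m le_m] := IH n.+1 k _ _ ltac:(lia) cpl1 ltac:(by rewrite -iterSr).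
  by exists m.+1; rewrite [iter m.+1 _ _]iterSr -(iter_step_grow_partial n D_ge0 lt_DD').
- have := coupled_grow cpl no_tight no_tight' D'_ge0 (ltW lt_D'D) (lexx _).
  rewrite -[grow s' _ _]step_grow // => cpl1.
  have done_k' : st_done (iter k.+1 (moat_step s) (grow s st (next_delay s' st'))).
    by rewrite iter_step_grow_partial.
  have [m le_m] := IH n k.+1 _ _ ltac:(lia) cpl1 done_k'.
  have [m' le_m'] := base_iter_grow_partial m D'_ge0 lt_D'D running no_tight act.
  by exists m'; rewrite iterSr (le_trans le_m).
- have cpl1 : coupled (moat_step s st) (moat_step s' st').
    rewrite (step_grow running no_tight act) (step_grow running' no_tight' act') -eq_DD'.
    by apply: coupled_grow; rewrite ?eq_DD'.
  have [m le_m] := IH n k _ _ ltac:(lia) cpl1 ltac:(by rewrite -iterSr).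
  by exists m.+1; rewrite !iterSr.
Qed.

End Coupling.

End ShadowMoat.

Lemma y_base_antimono (R : realFieldType) (V E : finType) (ends : E -> V * V) (c : E -> R)
    (tie : {set E} -> E) (t s s' : V -> R) :
  (forall e, 0 <= c e) -> (forall A : {set E}, A != set0 -> tie A \in A) ->
  (forall w, 0 <= t w) -> (forall w, t w <= s w) -> (forall w, s w <= s' w) ->
  y_base ends c tie t s' <= y_base ends c tie t s.
Proof.
move=> c_ge0 tie_in t_ge0 t_le_s s_le_s'.
have done_s : st_done (iter (fuel V E) (step ends c tie s t) (init_state R V E)).
  exact: final_state_done.
have [m le_m] := coupled_base_bound tie_in t_ge0 t_le_s s_le_s'
  (leqnn (fuel V E + fuel V E)) (coupled_init ends c_ge0) done_s.
exact: le_trans le_m (base_iter_le_done _ done_s).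
Qed.

Unset Implicit Arguments.

Theorem mainTheorem13 (R : realFieldType) (V E : finType) (ends : E -> V * V)
  (c : E -> R) (tie : {set E} -> E) (t tstar : V -> R) (q : V) (tau : R) :
  (forall e, 0 <= c e) ->
  (forall A : {set E}, A != set0 -> tie A \in A) ->
  (forall v, 0 <= t v) ->
  (forall v, t v <= tstar v) ->
  tstar q <= tau ->
  0 <= Win ends c tie t tstar q tau.
Proof.
move=> c_ge0 tie_in t_ge0 t_le_tstar tstar_q_le.
rewrite subr_ge0; apply: y_base_antimono => // v.
by rewrite /boost; case: eqP => [-> |].
Qed.
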